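(* For all $0\le t<1$ and $x\in\mathbb{R}$, $V^*(t,x)\ge f(t,x)$, where $$V^*(t,x)=\begin{cases}\sqrt{1-t}\,\sqrt{2\pi}\,\Phi(-x/\sqrt{1-t})e^{x^2/(2(1-t))}v(C^* ), & x>C^*\sqrt{1-t},\\ f(t,x), & x\le C^*\sqrt{1-t}.\end{cases}$$
   Context: $\Phi$ is the standard normal distribution function. $B^*\approx0.84$ is the unique positive solution of $\sqrt{2\pi}(1-B^2)e^{B^2/2}\Phi(B)=B$. Define $U(t,x)=\sqrt{2\pi(1-t)}(1-(B^* )^2)e^{x^2/(2(1-t))}\Phi(x/\sqrt{1-t})$ for $x<B^*\sqrt{1-t}$, and $U(t,x)=x$ otherwise, for $0\le t<1$. Set $f(t,x)=U(t,x)-x$. For $C\le B^*$ let $v(C)=\frac{1}{\Phi(-C)}[(1-(B^* )^2)\Phi(C)-Ce^{-C^2/2}/\sqrt{2\pi}]$ and $u(C)=1-(B^* )^2-(1-C^2)\Phi(-C)-\frac{C}{\sqrt{2\pi}}e^{-C^2/2}$. $C^*<0$ is the unique negative zero of $u$, which maximizes $v$ on $(-\infty,B^*]$. *)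

From Stdlib Require Import Reals.
From Coquelicot Require Import Coquelicot.
Open Scope R_scope.

Definition Phi (x : R) : R :=
  / sqrt (2 * PI) *
  RInt_gen (fun s : R => exp (- s ^ 2 / 2)) (Rbar_locally m_infty) (at_point x).

Definition Bstar_eq (B : R) : Prop :=
  sqrt (2 * PI) * (1 - B ^ 2) * exp (B ^ 2 / 2) * Phi B = B.

Definition Ufun (B t x : R) : R :=
  if Rlt_dec x (B * sqrt (1 - t)) then
    sqrt (2 * PI * (1 - t)) * (1 - B ^ 2) * exp (x ^ 2 / (2 * (1 - t)))
      * Phi (x / sqrt (1 - t))
  else x.

Definition fval (B t x : R) : R := Ufun B t x - x.

Definition vfun (B C : R) : R :=
  / Phi (- C) * ((1 - B ^ 2) * Phi C - C * exp (- C ^ 2 / 2) / sqrt (2 * PI)).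

Definition ufun (B C : R) : R :=
  1 - B ^ 2 - (1 - C ^ 2) * Phi (- C) - C / sqrt (2 * PI) * exp (- C ^ 2 / 2).

Definition Vstar (B C t x : R) : R :=
  if Rlt_dec (C * sqrt (1 - t)) x then
    sqrt (1 - t) * sqrt (2 * PI) * Phi (- x / sqrt (1 - t))
      * exp (x ^ 2 / (2 * (1 - t))) * vfun B C
  else fval B t x.

(* Write B, C for B^*, C^*. With [y = x / sqrt (1 - t)] and [C < y < B], the difference
   [V^* - f] equals [sqrt (2 pi (1 - t)) e^(y^2/2)] times
     [k(y) = Phi(-y) v - (1 - B^2) Phi(y) + y phi(y)],  phi the standard normal density.
   The relation [u(C) = 0] says exactly [v(C) = B^2 - C^2], hence
   [k'(y) = phi(y) (C^2 - y^2)]: k increases on [C, -C] and decreases on [-C, B].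
   At the ends, [k(C) = 0] by the definition of [v], and [k(B) = Phi(-B) v >= 0] by the
   equation of [B]; so [k >= 0] in between. For [y >= B] we have [f = 0 <= V^*]. *)

From Stdlib Require Import Reals Lra.
From Coquelicot Require Import Coquelicot.
From mathcomp Require all_boot all_order all_algebra all_classical all_reals all_analysis Rstruct Rstruct_topology.
From Stdlib Require Import ssreflect.
Open Scope R_scope.

Definition gauss (u : R) : R := exp (- u ^ 2).

Lemma gauss_continuous (u : R) : continuous gauss u.
Proof. apply: ex_derive_continuous; rewrite /gauss; auto_derive; done. Qed.

Lemma ex_RInt_gauss (a b : R) : ex_RInt gauss a b.
Proof. apply: ex_RInt_continuous => z _; exact: gauss_continuous. Qed.

Module GaussIntegral.
Import all_boot all_order all_algebra all_classical all_reals all_analysis.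
Import Rstruct Rstruct_topology.
Import Order.TTheory GRing.Theory Num.Theory numFieldNormedType.Exports.
Local Open Scope classical_set_scope.
Local Open Scope ring_scope.

Lemma is_derive_derivable_pt_lim {f : R -> R} {x l : R} :
  derivable_pt_lim f x l -> @is_derive R R^o R^o x 1 f l.
Proof.
move=> f_lim.
pose q (h : R^o) : R^o := h^-1 * (f (h + x) - f x).
have q_cvg : q @ (0:R^o)^' --> (l:R^o).
  apply/cvgrPdist_lt => e /RltP e_pos.
  have [d Hd] := f_lim e e_pos.
  apply/nbhs_ballP; exists (pos d); first by apply/RltP; exact: cond_pos.
  move=> h /= h_small h_neq0.
  have h_lt : (Rabs h < d)%coqR.
    by move: h_small; rewrite /ball /= sub0r normrN => /RltP.
  move: (Hd h (fun E => negP h_neq0 (introT eqP E)) h_lt) => /RltP.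
  by rewrite RabsE distrC /q /= Rplus_comm mulrC.
have q_lim (g : R^o -> R^o) : g = q -> cvg (g @ 0^') /\ lim (g @ 0^') = l.
  by move=> ->; split; [exact: (cvgP l) | exact: cvg_lim].
split.
- rewrite /derivable; match goal with |- cvg (?g @ _) => apply: (proj1 (q_lim g _)) end.
  by apply/funext => h; rewrite /q /= /shift /GRing.scale /= mulr1.
- rewrite /derive; match goal with |- lim (?g @ _) = _ => apply: (proj2 (q_lim g _)) end.
  by apply/funext => h; rewrite /q /= /shift /GRing.scale /= mulr1.
Qed.

Lemma atanE (x : R) : Ratan.atan x = atan x.
Proof.
have cst (y : R) : Ratan.atan y - atan y = Ratan.atan 0 - atan 0.
  apply: (is_derive_0_is_cst (f := fun z : R => Ratan.atan z - atan z)) => z.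
  have := is_deriveB (is_derive_derivable_pt_lim (derivable_pt_lim_atan z))
                     (@is_derive1_atan R z).
  by rewrite RpowE RinvE subrr.
by apply: subr0_eq; rewrite cst atan0 Ratan.atan_0 subrr.
Qed.

Lemma PIE : PI = pi.
Proof.
have := atanE 1; rewrite atan_1 atan1 -INRE => E.
change (PI / 4 = pi / INR 4)%coqR in E; simpl INR in E; lra.
Qed.

Lemma gaussE (u : R) : gauss u = gauss_fun u.
Proof. by rewrite /gauss RexpE RpowE. Qed.

Lemma is_derive_RInt_gauss (y : R) :
  @is_derive R R^o R^o y 1 (fun x => RInt gauss 0 x) (gauss_fun y).
Proof.
rewrite -gaussE; apply/is_derive_derivable_pt_lim/is_derive_Reals.
apply: (is_derive_RInt _ _ 0); last exact: gauss_continuous.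
by apply: Hierarchy.filter_forall => b; exact: RInt_correct (ex_RInt_gauss 0 b).
Qed.

Lemma integral0_gaussE (x : R) :
  0 < x -> gauss_integral_proof.integral0_gauss x = RInt gauss 0 x.
Proof.
move=> x0; have F_cont (y : R) : {for y, continuous (fun x => RInt gauss 0 x)}.
  apply: (@differentiable_continuous _ R^o R^o); apply/derivable1_diffP.
  exact: (@derive.ex_derive _ _ _ _ _ _ _ (is_derive_RInt_gauss y)).
rewrite /gauss_integral_proof.integral0_gauss /Rintegral.
rewrite (@continuous_FTC2 R gauss_fun (fun x => RInt gauss 0 x) 0 x x0) //=.
- by rewrite RInt_point subr0.
- by apply: continuous_subspaceT; exact: continuous_gauss_fun.
- split.
  + by move=> y _; exact: (@derive.ex_derive _ _ _ _ _ _ _ (is_derive_RInt_gauss y)).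
  + by apply: cvg_at_right_filter; exact: F_cont.
  + by apply: cvg_at_left_filter; exact: F_cont.
- by move=> y _; rewrite derive1E; exact: (@derive.derive_val _ _ _ _ _ _ _ (is_derive_RInt_gauss y)).
Qed.

Lemma RInt_gauss_cvg :
  (RInt gauss 0 x : R^o) @[x --> +oo] --> (Num.sqrt pi / 2 : R^o).
Proof.
have : Num.sqrt (@gauss_integral_proof.integral0_gauss R x ^+ 2) @[x --> +oo]
    --> Num.sqrt (pi / 4).
  apply: continuous_cvg => //;
    [exact: sqrt_continuous | exact: gauss_integral_proof.cvg_integral0_gauss_sqr].
rewrite sqrtrM ?pi_ge0 // sqrtrV // (_ : 4 = 2 ^+ 2); last by rewrite expr2 -natrM.
rewrite sqrtr_sqr ger0_norm //; apply: cvg_trans; apply: near_eq_cvg.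
near=> x.
rewrite sqrtr_sqr ger0_norm ?gauss_integral_proof.integral0_gauss_ge0 //.
by rewrite integral0_gaussE.
Unshelve. end_near. Qed.

Lemma is_lim_RInt_gauss : is_lim (fun x => RInt gauss 0 x) p_infty (sqrt PI / 2).
Proof.
apply/is_lim_spec => eps.
have [M [_ HM]] := proj1 (cvgrPdist_lt _ _) RInt_gauss_cvg eps (introT RltP (cond_pos eps)).
exists M => x /RltP Mx; apply/RltP.
by rewrite RabsE RsqrtE PIE distrC; exact: HM.
Qed.

End GaussIntegral.

Lemma is_RInt_gen_m_infty (f : R -> R) (b l : R) :
  (forall a, ex_RInt f a b) -> is_lim (fun a => RInt f a b) m_infty l ->
  is_RInt_gen f (Rbar_locally m_infty) (at_point b) l.
Proof.
move=> f_int f_lim P P_l.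
apply: (Filter_prod _ _ _ (fun a => P (RInt f a b)) (fun b' => b' = b)) => //.
- exact: f_lim _ P_l.
- by move=> a _ Pa ->; exists (RInt f a b); split; first exact: RInt_correct (f_int a).
Qed.

Definition gauss_half (s : R) : R := exp (- s ^ 2 / 2).

Lemma gauss_half_continuous (u : R) : continuous gauss_half u.
Proof. apply: ex_derive_continuous; rewrite /gauss_half; auto_derive; done. Qed.

Lemma ex_RInt_gauss_half (a b : R) : ex_RInt gauss_half a b.
Proof. apply: ex_RInt_continuous => z _; exact: gauss_half_continuous. Qed.

Lemma gauss_half_pos (y : R) : 0 < gauss_half y.
Proof. exact: exp_pos. Qed.

Lemma gauss_half_opp (y : R) : gauss_half (- y) = gauss_half y.
Proof. by rewrite /gauss_half; f_equal; field. Qed.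

Lemma exp_sqr_gauss_half (y : R) : exp (y ^ 2 / 2) * gauss_half y = 1.
Proof. by rewrite /gauss_half -exp_plus -exp_0; congr exp; field. Qed.

Lemma sqrt_2PI_pos : 0 < sqrt (2 * PI).
Proof. apply: sqrt_lt_R0; have := PI_RGT_0; lra. Qed.

(* The substitution [s = - sqrt 2 * u]. *)
Lemma RInt_gauss_half_scale (a : R) :
  RInt gauss_half a 0 = sqrt 2 * RInt gauss 0 (- a / sqrt 2).
Proof.
have s2 : 0 < sqrt 2 by apply: sqrt_lt_R0; lra.
have s2s2 : sqrt 2 ^ 2 = 2 by rewrite /= Rmult_1_r sqrt_sqrt //; lra.
have := RInt_comp_lin gauss (- / sqrt 2) 0 a 0 (ex_RInt_gauss _ _).
rewrite (_ : - / sqrt 2 * a + 0 = - a / sqrt 2); last by field; lra.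
rewrite (_ : - / sqrt 2 * 0 + 0 = 0); last ring.
rewrite -(opp_RInt_swap gauss 0 (- a / sqrt 2) (ex_RInt_gauss _ _)).
rewrite (RInt_ext _ (fun y => scal (- / sqrt 2) (gauss_half y))).
  rewrite RInt_scal; last exact: ex_RInt_gauss_half.
  rewrite /scal /= /mult /= /opp /= => E.
  apply: (Rmult_eq_reg_l (- / sqrt 2)); first by rewrite E; field; lra.
  by apply: Ropp_neq_0_compat; apply: Rinv_neq_0_compat; lra.
move=> y _; rewrite /gauss /gauss_half; congr (scal _ (exp _)).
field_simplify; last lra; rewrite s2s2; field.
Qed.

Lemma is_lim_RInt_gauss_half :
  is_lim (fun a => RInt gauss_half a 0) m_infty (sqrt (2 * PI) / 2).
Proof.
have s2 : 0 < sqrt 2 by apply: sqrt_lt_R0; lra.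
apply: (is_lim_ext (fun a => sqrt 2 * RInt gauss 0 (- a / sqrt 2))).
  by move=> a; rewrite RInt_gauss_half_scale.
have -> : Finite (sqrt (2 * PI) / 2) = Rbar_mult (sqrt 2) (sqrt PI / 2).
  rewrite /= sqrt_mult; [|lra|have := PI_RGT_0; lra]; congr Finite; field.
apply: is_lim_scal_l; apply: (is_lim_comp (fun x => RInt gauss 0 x) _ _ _ p_infty).
- exact: GaussIntegral.is_lim_RInt_gauss.
- apply/is_lim_spec => M; exists (- M * sqrt 2) => x x_lt.
  by apply: (Rmult_lt_reg_r (sqrt 2)) => //; rewrite /Rdiv Rmult_assoc Rinv_l; lra.
- by exists 0.
Qed.

Lemma Phi_RInt (y : R) : Phi y = / 2 + RInt gauss_half 0 y / sqrt (2 * PI).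
Proof.
have gen : is_RInt_gen gauss_half (Rbar_locally m_infty) (at_point y)
             (plus (sqrt (2 * PI) / 2) (RInt gauss_half 0 y)).
  apply: (is_RInt_gen_Chasles _ 0).
  - exact: is_RInt_gen_m_infty (fun a => ex_RInt_gauss_half a 0) is_lim_RInt_gauss_half.
  - by apply/is_RInt_gen_at_point; exact: RInt_correct (ex_RInt_gauss_half _ _).
rewrite /Phi (is_RInt_gen_unique _ _ gen) /plus /=.
have := sqrt_2PI_pos => ?; field; lra.
Qed.

Lemma RInt_gauss_half_le (a : R) : RInt gauss_half a 0 <= sqrt (2 * PI) / 2.
Proof.
change (Rbar_le (RInt gauss_half a 0) (sqrt (2 * PI) / 2)).
apply: (is_lim_le_loc _ _ m_infty _ _ _ (is_lim_const _ _) is_lim_RInt_gauss_half).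
exists a => a' a'_lt.
have : 0 <= RInt gauss_half a' a.
  apply: RInt_ge_0; [lra | exact: ex_RInt_gauss_half | move=> x _; exact: Rlt_le (gauss_half_pos x)].
rewrite -(RInt_Chasles gauss_half a' a 0) /plus /=; try exact: ex_RInt_gauss_half.
lra.
Qed.

Lemma RInt_gauss_half_opp (y : R) : RInt gauss_half 0 (- y) = - RInt gauss_half 0 y.
Proof.
have := RInt_comp_lin gauss_half (-1) 0 0 y (ex_RInt_gauss_half _ _).
rewrite Rmult_0_r Rplus_0_r (_ : -1 * y + 0 = - y); last ring.
move=> <-; rewrite (RInt_ext _ (fun x => scal (-1) (gauss_half x))).
  by rewrite RInt_scal /scal /= /mult /=; [ring | exact: ex_RInt_gauss_half].
by move=> x _; rewrite Rplus_0_r -Ropp_mult_distr_l Rmult_1_l gauss_half_opp.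
Qed.

Lemma Phi_opp (y : R) : Phi (- y) = 1 - Phi y.
Proof. rewrite !Phi_RInt RInt_gauss_half_opp; have := sqrt_2PI_pos => ?; field; lra. Qed.

Lemma Phi_ge_half (y : R) : 0 <= y -> / 2 <= Phi y.
Proof.
move=> y_ge0; rewrite Phi_RInt.
have : 0 <= RInt gauss_half 0 y / sqrt (2 * PI).
  apply: Rdiv_le_0_compat; last exact: sqrt_2PI_pos.
  apply: RInt_ge_0 => //; first exact: ex_RInt_gauss_half.
  move=> x _; exact: Rlt_le (gauss_half_pos x).
lra.
Qed.

Lemma Phi_ge0 (y : R) : 0 <= Phi y.
Proof.
rewrite Phi_RInt -opp_RInt_swap; last exact: ex_RInt_gauss_half.
have := RInt_gauss_half_le y; have := sqrt_2PI_pos.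
move=> s_pos le_half.
rewrite /opp /= (_ : / 2 = (sqrt (2 * PI) / 2) / sqrt (2 * PI)); last by field; lra.
rewrite -Rdiv_plus_distr; apply: Rdiv_le_0_compat => //; lra.
Qed.

Lemma is_derive_Phi (y : R) : is_derive Phi y (gauss_half y / sqrt (2 * PI)).
Proof.
have dI : is_derive (fun z => RInt gauss_half 0 z) y (gauss_half y).
  apply: (is_derive_RInt _ _ 0); last exact: gauss_half_continuous.
  by apply: filter_forall => z; exact: RInt_correct (ex_RInt_gauss_half _ _).
have := is_derive_plus _ _ y _ _ (is_derive_const (/ 2) y)
                                 (is_derive_scal _ y (/ sqrt (2 * PI)) _ dI).
rewrite /plus /= Rplus_0_l (Rmult_comm _ (gauss_half y)) => dPhi.
by apply: (is_derive_ext _ _ _ _ _ dPhi) => z; rewrite Phi_RInt /Rdiv Rmult_comm.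
Qed.

Lemma is_derive_ge0_le (f df : R -> R) (a b : R) : a <= b ->
  (forall x, a <= x <= b -> is_derive f x (df x)) ->
  (forall x, a <= x <= b -> 0 <= df x) -> f a <= f b.
Proof.
move=> ab f_df df_ge0.
have [c [c_ab fab]] : exists c, a <= c <= b /\ f b - f a = df c * (b - a).
  have := MVT_gen f a b df; rewrite /= Rmin_left ?Rmax_right //; apply.
  - by move=> x x_ab; apply: f_df; lra.
  - move=> x x_ab; apply/continuity_pt_filterlim/ex_derive_continuous.
    by exists (df x); exact: f_df.
have := df_ge0 c c_ab; nra.
Qed.

(* The function [k] of the proof, with [v] for [v(C)]. *)
Definition excess (B v y : R) : R :=
  Phi (- y) * v - (1 - B ^ 2) * Phi y + y * gauss_half y / sqrt (2 * PI).

Lemma is_derive_excess (B v y : R) :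
  is_derive (excess B v) y (gauss_half y / sqrt (2 * PI) * (B ^ 2 - v - y ^ 2)).
Proof.
have dPhi z : Derive (fun x => Phi x) z = gauss_half z / sqrt (2 * PI).
  exact: is_derive_unique (is_derive_Phi z).
have exPhi z : ex_derive (fun x => Phi x) z.
  by exists (gauss_half z / sqrt (2 * PI)); exact: is_derive_Phi.
rewrite /excess /gauss_half; auto_derive; first by do !split.
rewrite !dPhi gauss_half_opp /gauss_half.
replace (- (y * (y * 1)) * / 2) with (- y ^ 2 / 2) by field.
have := sqrt_2PI_pos => ?; field; lra.
Qed.

Section Bstar_Cstar.

Variables B C : R.
Hypotheses (B_pos : 0 < B) (B_eq : Bstar_eq B) (C_neg : C < 0) (C_eq : ufun B C = 0).

Lemma Bstar_sqr_lt1 : 0 < 1 - B ^ 2.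
Proof.
have Phi_B := Phi_ge_half B (Rlt_le _ _ B_pos).
have := exp_pos (B ^ 2 / 2); have := sqrt_2PI_pos; move: B_eq; rewrite /Bstar_eq.
move=> eqB s_pos e_pos; apply: Rnot_le_lt => B1.
have : (1 - B ^ 2) * (sqrt (2 * PI) * exp (B ^ 2 / 2) * Phi B) <= 0.
  by apply: Rmult_le_0_r; [lra | apply: Rmult_le_pos; [nra | lra]].
have := B_pos; rewrite -{1}eqB; nra.
Qed.

Lemma Bstar_Phi : (1 - B ^ 2) * Phi B = B * gauss_half B / sqrt (2 * PI).
Proof.
have e_g := exp_sqr_gauss_half B; have s_pos := sqrt_2PI_pos.
set g := gauss_half B in e_g *; rewrite -[in RHS]B_eq.
rewrite -[LHS]Rmult_1_r -e_g; field; lra.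
Qed.

Lemma vfun_pos : 0 < vfun B C.
Proof.
have := Phi_ge_half (- C) ltac:(lra); have := Phi_ge0 C; have := Bstar_sqr_lt1.
have := gauss_half_pos C; have := sqrt_2PI_pos; rewrite /vfun -/(gauss_half C).
move=> s_pos g_pos B1 PhiC PhimC.
apply: Rmult_lt_0_compat; first by apply: Rinv_0_lt_compat; lra.
have : 0 < - C * gauss_half C / sqrt (2 * PI) by apply: Rdiv_lt_0_compat; nra.
rewrite /Rdiv; nra.
Qed.

Lemma vfun_Cstar : vfun B C = B ^ 2 - C ^ 2.
Proof.
have PhimC := Phi_ge_half (- C) ltac:(lra); have s_pos := sqrt_2PI_pos.
have PhiC : Phi C = 1 - Phi (- C) by rewrite Phi_opp; ring.
have num : (1 - B ^ 2) * Phi C - C * exp (- C ^ 2 / 2) / sqrt (2 * PI)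
           = Phi (- C) * (B ^ 2 - C ^ 2).
  have : C * exp (- C ^ 2 / 2) / sqrt (2 * PI) = C / sqrt (2 * PI) * exp (- C ^ 2 / 2).
    by field; lra.
  move: C_eq; rewrite /ufun PhiC; lra.
rewrite /vfun num; field; lra.
Qed.

Lemma excess_Cstar : excess B (vfun B C) C = 0.
Proof.
have := Phi_ge_half (- C) ltac:(lra); have := sqrt_2PI_pos.
rewrite /excess /vfun /gauss_half => ? ?; field; lra.
Qed.

Lemma excess_Bstar_ge0 : 0 <= excess B (vfun B C) B.
Proof.
rewrite /excess -Bstar_Phi; have := Phi_ge0 (- B); have := vfun_pos; nra.
Qed.

Lemma excess_ge0 (y : R) : C <= y <= B -> 0 <= excess B (vfun B C) y.
Proof.
move=> Cy_B; have v_pos := vfun_pos; rewrite vfun_Cstar in v_pos.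
have mC_B : - C < B by nra.
pose dexcess z := gauss_half z / sqrt (2 * PI) * (C ^ 2 - z ^ 2).
have excess_dexcess z : is_derive (excess B (vfun B C)) z (dexcess z).
  have := is_derive_excess B (vfun B C) z; rewrite {2}vfun_Cstar.
  by rewrite (_ : B ^ 2 - (B ^ 2 - C ^ 2) - z ^ 2 = C ^ 2 - z ^ 2); last ring.
have dens_pos z : 0 < gauss_half z / sqrt (2 * PI).
  exact: Rdiv_lt_0_compat (gauss_half_pos z) sqrt_2PI_pos.
case: (Rle_lt_dec y (- C)) => [y_le | y_gt].
- rewrite -excess_Cstar; apply: (is_derive_ge0_le _ dexcess C y); first lra.
  + by move=> z _; exact: excess_dexcess.
  + move=> z z_Cy; apply: Rmult_le_pos; [exact: Rlt_le (dens_pos z) | nra].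
- apply: (Rle_trans _ _ _ excess_Bstar_ge0).
  suff : - excess B (vfun B C) y <= - excess B (vfun B C) B by lra.
  apply: (is_derive_ge0_le (fun z => - excess B (vfun B C) z) (fun z => - dexcess z) y B).
  + lra.
  + by move=> z _; exact: is_derive_opp (excess_dexcess z).
  + move=> z z_yB; have : C ^ 2 - z ^ 2 <= 0 by nra.
    have := dens_pos z; rewrite /dexcess; nra.
Qed.

End Bstar_Cstar.

Theorem lemma3p2 (B C : R)
  (hB : 0 < B) (hBeq : Bstar_eq B)
  (hC : C < 0) (hCeq : ufun B C = 0)
  (t x : R) (ht0 : 0 <= t) (ht1 : t < 1) :
  Vstar B C t x >= fval B t x.
Proof.
rewrite /Vstar; case: Rlt_dec => [Cx | _]; last exact: Rge_refl.
have s_pos : 0 < sqrt (1 - t) by apply: sqrt_lt_R0; lra.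
have s_sqr : sqrt (1 - t) * sqrt (1 - t) = 1 - t by apply: sqrt_sqrt; lra.
set s := sqrt (1 - t) in Cx s_pos s_sqr *; set y := x / s.
have x_eq : x = y * s by rewrite /y; field; lra.
have Phi_arg : - x / s = - y by rewrite /y; field; lra.
have exp_arg : x ^ 2 / (2 * (1 - t)) = y ^ 2 / 2 by rewrite -s_sqr x_eq; field; lra.
have sqrt_arg : sqrt (2 * PI * (1 - t)) = sqrt (2 * PI) * s.
  by rewrite sqrt_mult //; have := PI_RGT_0; lra.
have scale_ge0 : 0 <= s * sqrt (2 * PI) * exp (y ^ 2 / 2).
  by have := sqrt_2PI_pos; have := exp_pos (y ^ 2 / 2); move=> *; apply: Rmult_le_pos; nra.
rewrite /fval /Ufun -/s Phi_arg exp_arg sqrt_arg -/y.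
case: Rlt_dec => [xB | _]; apply: Rle_ge.
- have y_CB : C <= y <= B by split; apply: Rlt_le; apply: (Rmult_lt_reg_r s); lra.
  have := excess_ge0 B C hB hBeq hC hCeq y y_CB.
  have := exp_sqr_gauss_half y; have := sqrt_2PI_pos => s2_pos e_g excess_y.
  have gap : s * sqrt (2 * PI) * Phi (- y) * exp (y ^ 2 / 2) * vfun B C
             - (sqrt (2 * PI) * s * (1 - B ^ 2) * exp (y ^ 2 / 2) * Phi y - x)
             = s * sqrt (2 * PI) * exp (y ^ 2 / 2) * excess B (vfun B C) y
               + y * s * (1 - exp (y ^ 2 / 2) * gauss_half y).
    by rewrite x_eq /excess; field; lra.
  rewrite e_g in gap; nra.
- have : 0 <= Phi (- y) * vfun B C.
    exact: Rmult_le_pos (Phi_ge0 _) (Rlt_le _ _ (vfun_pos B C hB hBeq hC)).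
  nra.
Qed.
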